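(* Let $g(x)=\sum_{n\ge 1}\frac{2\,(4n+1)!}{(n+1)!\,(3n+2)!}\,x^n$. Then $g$ satisfies, as a formal power series, the algebraic equation $$x(x^2+11x-1)+(4x^3+25x^2-14x+1)\,g(x)+x(6x^2+17x+3)\,g(x)^2+x^2(4x+3)\,g(x)^3+x^3\,g(x)^4=0.$$ Moreover the series converges at $x=\frac{27}{256}$ and $g\!\left(\frac{27}{256}\right)=\frac{5}{27}$. *)

From HB Require Import structures.
From mathcomp Require Import all_boot all_order all_algebra.
From mathcomp Require Import all_classical all_reals all_analysis.
Set Implicit Arguments. Unset Strict Implicit. Unset Printing Implicit Defensive.
Import Order.TTheory GRing.Theory Num.Theory.
Local Open Scope ring_scope.

Definition gcoef (R : fieldType) (n : nat) : R :=
  if n is 0 then 0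
  else (2 * (4 * n + 1)`!)%:R / ((n + 1)`! * (3 * n + 2)`!)%:R.

Definition fps (R : comRingType) := nat -> R.
Definition fps_add (R : comRingType) (a b : fps R) : fps R := fun n => a n + b n.
Definition fps_mul (R : comRingType) (a b : fps R) : fps R :=
  fun n => \sum_(i < n.+1) a i * b (n - i)%N.
Definition fps_one (R : comRingType) : fps R := fun n => if n is 0 then 1 else 0.
Definition fps_pow (R : comRingType) (a : fps R) (k : nat) : fps R :=
  iter k (fps_mul a) (@fps_one R).
Definition fps_of_poly (R : comRingType) (p : {poly R}) : fps R := fun n => p`_n.

From HB Require Import structures.
From mathcomp Require Import all_boot all_order all_algebra.
From mathcomp Require Import all_classical all_reals all_analysis.
From mathcomp Require Import ring lra zify.
Set Implicit Arguments. Unset Strict Implicit. Unset Printing Implicit Defensive.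
Import Order.TTheory GRing.Theory Num.Theory.
Import numFieldNormedType.Exports.
Local Open Scope classical_set_scope.
Local Open Scope ring_scope.

(* Let T = 1 + x T^4 be the series of quaternary trees; then g = 2 T^2 - T^3 - 1.
   The Euler operator theta = x d/dx acts on polynomials in T through
   theta T = T (T - 1) / (4 - 3 T), so H = 2 T^2 - T^3 satisfies a third-order
   hypergeometric equation, whose coefficient recurrence is solved by the closed
   form of g; and substituting x = (T - 1) / T^4 turns the quartic equation of g
   into an identity in T.  Power series are replaced by the approximations
   T_k = 1 + x T_(k-1)^4, which agree with T below degree k.
   At x = 27/256 the partial sums of T^j increase to L^j, where L is a
   nonnegative solution of L = 1 + x L^4; for this x the only one is the double
   root 4/3, so g(27/256) = 2 (4/3)^2 - (4/3)^3 - 1 = 5/27. *)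

(** * The Euler operator and congruences modulo X^n *)

Definition theta (R : comNzRingType) (p : {poly R}) : {poly R} := 'X * p^`().

Section Theta.
Variable R : comNzRingType.
Implicit Types p q : {poly R}.

Fact theta_is_semilinear : semilinear (@theta R).
Proof.
split=> [k p|p q]; rewrite /theta; first by rewrite linearZ /= -scalerAr.
by rewrite linearD /= mulrDr.
Qed.
HB.instance Definition _ := GRing.isSemilinear.Build R {poly R} {poly R} _ (@theta R)
  theta_is_semilinear.

Lemma thetaC (c : R) : theta c%:P = 0.
Proof. by rewrite /theta derivC mulr0. Qed.

Lemma thetaX : theta 'X = 'X :> {poly R}.
Proof. by rewrite /theta derivX mulr1. Qed.

Lemma thetaXn n : theta 'X^n = 'X^n *+ n :> {poly R}.
Proof. by rewrite /theta derivXn mulrnAr; case: n => [|n]; rewrite ?mulr0n // -exprS. Qed.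

Lemma thetaM p q : theta (p * q) = theta p * q + p * theta q.
Proof. by rewrite /theta derivM; ring. Qed.

Lemma theta_exp p n : theta (p ^+ n) = p ^+ n.-1 * theta p *+ n.
Proof. by rewrite /theta deriv_exp mulrnAr; congr (_ *+ _); ring. Qed.

Lemma theta_comp p q : theta (p \Po q) = (p^`() \Po q) * theta q.
Proof. by rewrite /theta deriv_comp mulrCA. Qed.

Lemma coef_theta p m : (theta p)`_m = p`_m *+ m.
Proof. by rewrite /theta coefXM; case: m => [|m]; rewrite ?mulr0n // coef_deriv. Qed.

End Theta.

Lemma dvdp_subXX (R : idomainType) (d p q : {poly R}) j :
  d %| p - q -> d %| p ^+ j - q ^+ j.
Proof. by rewrite subrXX; apply: dvdp_mulr. Qed.

Section DvdpXn.
Variable R : fieldType.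
Implicit Types p c : {poly R}.

Lemma coef_dvdpXn M p m : 'X^M %| p -> (m < M)%N -> p`_m = 0.
Proof. by move=> /dvdpP [q ->]; rewrite coefMXn => ->. Qed.

Lemma coprimep_Xn M c : c`_0 != 0 -> coprimep 'X^M c.
Proof.
move=> c0; apply: coprimep_expl; rewrite coprimep_sym -[X in coprimep _ X]subr0.
by rewrite coprimep_XsubC rootE horner_coef0.
Qed.

Lemma dvdp_theta M p : 'X^M %| p -> 'X^M %| theta p.
Proof.
move=> /dvdpP [q ->]; rewrite thetaM thetaXn mulrnAr -mulr_natr -mulrA mulrCA.
by rewrite dvdp_add ?dvdp_mulIr ?dvdp_mulIl.
Qed.

End DvdpXn.

(** * Polynomial approximations of the series of quaternary trees *)

Fixpoint tree_approx (R : nzRingType) (k : nat) : {poly R} :=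
  if k is k.+1 then 1 + 'X * tree_approx R k ^+ 4 else 1.

Section TreeApprox.
Variable R : idomainType.
Local Notation T := (tree_approx R).

Lemma tree_approx_coef0 k : (T k)`_0 = 1.
Proof. by case: k => [|k]; rewrite /= ?coefD ?coefXM coef1 ?addr0. Qed.

Lemma dvdp_tree_approx_subS k : 'X^k %| T k.+1 - T k.
Proof.
elim: k => [|k IHk]; first by rewrite dvd1p.
have -> : T k.+2 - T k.+1 = 'X * (T k.+1 ^+ 4 - T k ^+ 4) by rewrite /=; ring.
by rewrite exprS dvdp_mul ?dvdp_subXX.
Qed.

Lemma dvdp_tree_approx n m : (n <= m)%N -> 'X^n %| T m - T n.
Proof.
elim: m => [|m IHm]; first by rewrite leqn0 => /eqP ->; rewrite subrr dvdp0.
rewrite leq_eqVlt ltnS => /predU1P [-> | lenm]; first by rewrite subrr dvdp0.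
rewrite -(subrK (T m) (T m.+1)) -addrA; apply: dvdp_add; last exact: IHm.
exact: dvdp_trans (dvdp_exp2l _ lenm) (dvdp_tree_approx_subS m).
Qed.

Lemma dvdp_tree_approx_eqn k : 'X^k %| 'X * T k ^+ 4 - (T k - 1).
Proof.
have -> : 'X * T k ^+ 4 - (T k - 1) = T k.+1 - T k by rewrite /=; ring.
exact: dvdp_tree_approx_subS.
Qed.

End TreeApprox.

(* The hypergeometric operator 3 (theta + 1) (3 theta + 1) (3 theta + 2)
   - 4 X (4 theta + 2) (4 theta + 3) (4 theta + 5), expanded. *)
Definition hyperg_op (R : comNzRingType) (H : {poly R}) : {poly R} :=
  6%:R * H + 33%:R * theta H + 54%:R * theta (theta H) + 27%:R * theta (theta (theta H))
  - 'X * (120%:R * H + 496%:R * theta H + 640%:R * theta (theta H)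
          + 256%:R * theta (theta (theta H))).

Section TreeCongruence.
Variables (R : fieldType) (M : nat) (T : {poly R}).
Hypothesis tree_eqn : 'X^M %| 'X * T ^+ 4 - (T - 1).

Let u : {poly R} := 4%:R - 3%:R * 'X.
Let s : {poly R} := 'X ^+ 2 - 'X.
Let U := u \Po T.

(* theta T = T (T - 1) / (4 - 3 T): apply theta to the tree equation. *)
Lemma theta_tree_cong : 'X^M %| U * theta T - (s \Po T).
Proof.
have dE := dvdp_theta tree_eqn.
have -> : U * theta T - (s \Po T) =
    (T + 4%:R * theta T) * ('X * T ^+ 4 - (T - 1)) - T * theta ('X * T ^+ 4 - (T - 1)).
  rewrite /U !(raddfB, raddfD, raddfN) /= thetaM thetaX theta_exp -polyC1 thetaC polyC1.
  by rewrite !rmorphM /= !rmorph1 !comp_polyX; ring.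
by apply: dvdp_sub; apply: dvdp_mull.
Qed.

(* Read U^a D = p(T) as D = p(T) / (4 - 3 T)^a; then theta D has denominator (4 - 3 T)^(a+2). *)
Lemma theta_cong_step a D p :
    'X^M %| U ^+ a * D - (p \Po T) ->
  'X^M %| U ^+ a.+2 * theta D - (((u * p^`() + (3 * a)%:R * p) * s) \Po T).
Proof.
move=> hD; have dD := dvdp_theta hD; have hT := theta_tree_cong.
have thU : theta U = - 3%:R * theta T.
  by rewrite /U theta_comp /u !poly.derivE !(addr0, mul0r, add0r, mulr1) rmorphN rmorph_nat.
have thUaD : U ^+ 2 * theta (U ^+ a * D)
             = U ^+ a.+2 * theta D - (3 * a)%:R * U ^+ a * D * (U * theta T).
  transitivity (U * (U * theta (U ^+ a)) * D + U ^+ a.+2 * theta D).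
    by rewrite thetaM !exprS; ring.
  rewrite theta_exp thU; case: a {hD dD} => [|a]; first by rewrite !mulr0n mulr0 mul0r; ring.
  by rewrite !exprS; ring.
have -> : ((u * p^`() + (3 * a)%:R * p) * s) \Po T
          = (U * (p^`() \Po T) + (3 * a)%:R * (p \Po T)) * (s \Po T).
  by rewrite rmorphM rmorphD !rmorphM rmorph_nat.
have -> : U ^+ a.+2 * theta D - (U * (p^`() \Po T) + (3 * a)%:R * (p \Po T)) * (s \Po T) =
    U ^+ 2 * theta (U ^+ a * D - (p \Po T))
    + (U * (p^`() \Po T) + (3 * a)%:R * U ^+ a * D) * (U * theta T - (s \Po T))
    + (3 * a)%:R * (s \Po T) * (U ^+ a * D - (p \Po T)).
  rewrite [theta (_ - _)]raddfB /= (mulrBr (U ^+ 2)) thUaD theta_comp.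
  by rewrite !exprS; ring.
by do 2?apply: dvdp_add; apply: dvdp_mull.
Qed.

Let h : {poly R} := 2%:R * 'X^2 - 'X^3.
Let p1 : {poly R} := 'X^2 * ('X - 1) * u ^+ 2.
Let p2 : {poly R} := 'X^2 * ('X - 1) * (3%:R * 'X - 2%:R) * u ^+ 3.
Let p3 : {poly R} :=
  'X^2 * ('X - 1) * (16%:R - 66%:R * 'X + 78%:R * 'X^2 - 27%:R * 'X^3) * u ^+ 3.

Lemma theta1_tree_cong : 'X^M %| U ^+ 2 * theta (h \Po T) - (p1 \Po T).
Proof.
rewrite (_ : p1 = (u * h^`() + (3 * 0)%:R * h) * s); last first.
  by rewrite /p1 /h /u /s !poly.derivE; ring.
by apply: theta_cong_step; rewrite expr0 mul1r subrr dvdp0.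
Qed.

Lemma theta2_tree_cong : 'X^M %| U ^+ 4 * theta (theta (h \Po T)) - (p2 \Po T).
Proof.
rewrite (_ : p2 = (u * p1^`() + (3 * 2)%:R * p1) * s); last first.
  by rewrite /p1 /p2 /u /s !poly.derivE; ring.
exact: theta_cong_step theta1_tree_cong.
Qed.

Lemma theta3_tree_cong : 'X^M %| U ^+ 6 * theta (theta (theta (h \Po T))) - (p3 \Po T).
Proof.
rewrite (_ : p3 = (u * p2^`() + (3 * 4)%:R * p2) * s); last first.
  by rewrite /p2 /p3 /u /s !poly.derivE; ring.
exact: theta_cong_step theta2_tree_cong.
Qed.

Lemma hyperg_op_tree : T`_0 = 1 -> 'X^M %| hyperg_op (2%:R * T ^+ 2 - T ^+ 3) - 6%:R.
Proof.
move=> T0.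
have UE : U = 4%:R - 3%:R * T by rewrite /U /u rmorphB rmorphM /= !rmorph_nat comp_polyX.
have hE : h \Po T = 2%:R * T ^+ 2 - T ^+ 3.
  by rewrite /h !(comp_polyM, comp_polyB, comp_polyX, rmorph_nat); ring.
have [p1E p2E p3E] : [/\ p1 \Po T = T ^+ 2 * (T - 1) * U ^+ 2,
    p2 \Po T = T ^+ 2 * (T - 1) * (3%:R * T - 2%:R) * U ^+ 3
  & p3 \Po T = T ^+ 2 * (T - 1) * (16%:R - 66%:R * T + 78%:R * T ^+ 2 - 27%:R * T ^+ 3) * U ^+ 3].
  by split; rewrite UE !(comp_polyM, comp_polyB, comp_polyD, comp_polyX, rmorph_nat, rmorph1);
    ring.
have U0 : U`_0 = 1 by rewrite UE coefB coef0M T0 -!polyC_natr !coefC; ring.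
rewrite -(Gauss_dvdpr _ (@coprimep_Xn _ M (U ^+ 6 * T ^+ 4) _)); last first.
  by rewrite -horner_coef0 hornerM !horner_exp !horner_coef0 U0 T0 !expr1n mulr1 oner_eq0.
have c1 := theta1_tree_cong; have c2 := theta2_tree_cong; have c3 := theta3_tree_cong.
rewrite -hE; set H := h \Po T.
set e1 := _ - (p1 \Po T) in c1; set e2 := _ - (p2 \Po T) in c2; set e3 := _ - (p3 \Po T) in c3.
(* Clear the denominators of theta^k H by U^6 and replace X T^4 by T - 1. *)
have -> : U ^+ 6 * T ^+ 4 * (hyperg_op H - 6%:R) =
    T ^+ 4 * (33%:R * U ^+ 4 * e1 + 54%:R * U ^+ 2 * e2 + 27%:R * e3)
    - 'X * T ^+ 4 * (496%:R * U ^+ 4 * e1 + 640%:R * U ^+ 2 * e2 + 256%:R * e3)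
    - (120%:R * U ^+ 6 * H + 496%:R * U ^+ 4 * (p1 \Po T) + 640%:R * U ^+ 2 * (p2 \Po T)
       + 256%:R * (p3 \Po T)) * ('X * T ^+ 4 - (T - 1)).
  rewrite /hyperg_op /e1 /e2 /e3; set t1 := theta H; set t2 := theta t1; set t3 := theta t2.
  by rewrite p1E p2E p3E /H hE UE; ring.
by repeat (assumption || apply: dvdp_sub || apply: dvdp_add || apply: dvdp_mull).
Qed.

End TreeCongruence.

(** * The coefficients of g *)

Lemma coef_hyperg_op (R : comNzRingType) (H : {poly R}) m :
  (hyperg_op H)`_m = H`_m *+ (3 * m.+1 * (3 * m + 1) * (3 * m + 2))%N
    - (if m is k.+1 then H`_k *+ (4 * (4 * k + 2) * (4 * k + 3) * (4 * k + 5))%N else 0).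
Proof.
rewrite /hyperg_op coefB coefXM; do 3 rewrite coefD; rewrite -!polyC_natr !coefCM !coef_theta.
by case: m => [|m] /=; [|do 3 rewrite coefD; rewrite !coefCM !coef_theta]; ring.
Qed.

Definition hcoef (R : fieldType) (m : nat) : R :=
  (2 * (4 * m + 1)`!)%:R / ((m + 1)`! * (3 * m + 2)`!)%:R.

Section Hcoef.
Variable R : numFieldType.

Lemma hcoef0 : hcoef R 0 = 1.
Proof. by rewrite /hcoef /= divff // pnatr_eq0. Qed.

Lemma gcoefE m : gcoef R m = hcoef R m - (m == 0)%:R.
Proof. by case: m => [|m]; rewrite ?hcoef0 ?subrr // subr0. Qed.

Lemma hcoefS m : hcoef R m.+1 *+ (3 * m.+2 * (3 * m.+1 + 1) * (3 * m.+1 + 2))%N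
  = hcoef R m *+ (4 * (4 * m + 2) * (4 * m + 3) * (4 * m + 5))%N.
Proof.
have fact_neq0 k : (k`!)%:R != 0 :> R by rewrite pnatr_eq0 -lt0n fact_gt0.
rewrite -[LHS]mulr_natr -[RHS]mulr_natr /hcoef.
have -> : (4 * m.+1 + 1 = (4 * m + 1).+4)%N by lia.
have -> : (m.+1 + 1 = (m + 1).+1)%N by lia.
have -> : (3 * m.+1 + 2 = (3 * m + 2).+3)%N by lia.
rewrite !factS.
have := fact_neq0 (4 * m + 1); have := fact_neq0 (m + 1); have := fact_neq0 (3 * m + 2).
move: (4 * m + 1)`! (m + 1)`! (3 * m + 2)`! => A B C hC hB hA.
rewrite !natrM; field.
by rewrite hB hC /= -!natrM -!natrD natr1 ?nat1r !pnatr_eq0.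
Qed.

Lemma coef_hyperg_sol M (H : {poly R}) :
  'X^M %| hyperg_op H - 6%:R -> forall m, (m < M)%N -> H`_m = hcoef R m.
Proof.
move=> hH; elim=> [|m IHm] ltmM; have := coef_dvdpXn hH ltmM;
  rewrite coefB coef_hyperg_op -polyC_natr coefC /= subr0 => /eqP; rewrite subr_eq0.
  by rewrite hcoef0 eqrMn2r => /orP [|/eqP].
by rewrite (IHm (ltnW ltmM)) -hcoefS eqr_pMn2r ?muln_gt0 // => /eqP.
Qed.

End Hcoef.

Lemma gcoef_tree_approx (R : numFieldType) M k :
  (k < M)%N -> gcoef R k = (2%:R * tree_approx R M ^+ 2 - tree_approx R M ^+ 3 - 1)`_k.
Proof.
move=> ltkM; have /coef_hyperg_sol/(_ k ltkM) hk :=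
  hyperg_op_tree (dvdp_tree_approx_eqn R M) (tree_approx_coef0 R M).
by rewrite gcoefE coefB hk coef1 eq_sym.
Qed.

(** * The algebraic equation *)

Lemma fps_mul_pow_poly (R : comNzRingType) (a : fps R) (p q : {poly R}) n j :
    (forall k, (k <= n)%N -> a k = p`_k) ->
  fps_mul (fps_of_poly q) (fps_pow a j) n = (q * p ^+ j)`_n.
Proof.
move=> eq_ap.
have pow_eq i m : (m <= n)%N -> fps_pow a i m = (p ^+ i)`_m.
  elim: i m => [|i IHi] m lemn; first by rewrite expr0 coef1; case: m {lemn}.
  rewrite exprS coefM /fps_pow iterS -/(fps_pow a i) /fps_mul; apply: eq_bigr => l _.
  by rewrite eq_ap ?IHi ?(leq_trans (leq_subr _ _) lemn) // (leq_trans _ lemn) // -ltnS.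
by rewrite /fps_mul coefM; apply: eq_bigr => l _; rewrite pow_eq ?leq_subr.
Qed.

Definition grel (R : comNzRingType) (x y : R) : R :=
  x * (x ^+ 2 + 11%:R * x - 1) + (4%:R * x ^+ 3 + 25%:R * x ^+ 2 - 14%:R * x + 1) * y
  + x * (6%:R * x ^+ 2 + 17%:R * x + 3%:R) * y ^+ 2 + x ^+ 2 * (4%:R * x + 3%:R) * y ^+ 3
  + x ^+ 3 * y ^+ 4.

(* t^12 grel x g is a polynomial in a = x t^4, which vanishes at a = t - 1. *)
Lemma grel_tree (R : comNzRingType) (x t : R) :
  let g := 2%:R * t ^+ 2 - t ^+ 3 - 1 in let a := x * t ^+ 4 in let b := t - 1 in
  t ^+ 12 * grel x g = (a - b) * (t ^+ 8 * (3%:R * g ^+ 2 - 14%:R * g - 1)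
    + (a + b) * t ^+ 4 * (3%:R * g ^+ 3 + 17%:R * g ^+ 2 + 25%:R * g + 11%:R)
    + (a ^+ 2 + a * b + b ^+ 2) * t ^+ 8 * (2%:R - t) ^+ 4).
Proof. by rewrite /grel; ring. Qed.

Lemma dvdp_grel_tree (R : fieldType) M :
  'X^M %| grel 'X (2%:R * tree_approx R M ^+ 2 - tree_approx R M ^+ 3 - 1).
Proof.
rewrite -(Gauss_dvdpr _ (@coprimep_Xn _ M (tree_approx R M ^+ 12) _)); last first.
  by rewrite -horner_coef0 horner_exp horner_coef0 tree_approx_coef0 expr1n oner_eq0.
by rewrite grel_tree dvdp_mulr // dvdp_tree_approx_eqn.
Qed.

(** * Evaluation at 27/256 *)

Section TakePoly.
Variable R : numFieldType.
Implicit Types (p q : {poly R}) (x : R).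
(* Not [polyOver Num.nneg]: the closure instances are keyed on nneg_num_pred. *)
Local Notation nneg := (polyOver (@Num.Def.nneg_num_pred R)).

Lemma dvdp_take_poly n p : 'X^n %| p - take_poly n p.
Proof. by rewrite -{1}(poly_take_drop n p) addrAC subrr add0r dvdp_mull. Qed.

Lemma take_poly_dvdpXn n p q : 'X^n %| p - q -> take_poly n p = take_poly n q.
Proof.
move=> dvd_pq; apply/polyP => i; rewrite !coef_take_poly; case: ifP => // ltin.
by apply/eqP; rewrite -subr_eq0 -coefB (coef_dvdpXn dvd_pq ltin).
Qed.

Lemma horner_take_poly n p x : (take_poly n p).[x] = \sum_(k < n) p`_k * x ^+ k.
Proof.
rewrite (horner_coef_wide _ (size_take_poly n p)).
by apply: eq_bigr => k _; rewrite coef_take_poly ltn_ord.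
Qed.

Lemma take_poly_nneg n p : p \is a nneg -> take_poly n p \is a nneg.
Proof.
move=> /polyOverP p_ge0; apply/polyOverP => i.
by rewrite coef_take_poly; case: ifP => _; rewrite ?p_ge0 ?rpred0.
Qed.

Lemma sub_take_poly_nneg n p : p \is a nneg -> p - take_poly n p \is a nneg.
Proof.
move=> /polyOverP p_ge0; rewrite -{1}(poly_take_drop n p) addrAC subrr add0r.
by rewrite rpredM ?polyOverXn //; apply/polyOverP => i; rewrite coef_drop_poly p_ge0.
Qed.

Lemma nneg_subXX p q j : p \is a nneg -> q - p \is a nneg -> q ^+ j - p ^+ j \is a nneg.
Proof.
move=> p_ge0 qp_ge0; have q_ge0 : q \is a nneg by rewrite -(subrK p q) rpredD.
elim: j => [|j IHj]; first by rewrite subrr rpred0.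
have -> : q ^+ j.+1 - p ^+ j.+1 = q * (q ^+ j - p ^+ j) + (q - p) * p ^+ j.
  by rewrite !exprS; ring.
by rewrite rpredD ?rpredM ?rpredX.
Qed.

Lemma ler_horner_nneg p q x : q - p \is a nneg -> 0 <= x -> p.[x] <= q.[x].
Proof.
by move=> qp_ge0 x_ge0; rewrite -subr_ge0 -hornerN -hornerD -nnegrE rpred_horner.
Qed.

End TakePoly.

Section TreePartialSums.
Variable R : numFieldType.
Local Notation T := (tree_approx R).
Local Notation nneg := (polyOver (@Num.Def.nneg_num_pred R)).

Lemma tree_approx_nneg k : T k \is a nneg.
Proof. by elim: k => [|k IHk] /=; rewrite ?rpred1 // rpredD ?rpred1 ?rpredM ?rpredX ?polyOverX. Qed.

Variable x : R.
Hypothesis x_ge0 : 0 <= x.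

(* The partial sum of T(x)^j up to degree n - 1; T n agrees with T below degree n. *)
Definition tree_psum j n := (take_poly n (T n ^+ j)).[x].

Lemma tree_psum_ge0 j n : 0 <= tree_psum j n.
Proof. by rewrite -nnegrE rpred_horner ?take_poly_nneg ?rpredX ?tree_approx_nneg. Qed.

Lemma take_tree_approx n m j : (n <= m)%N -> take_poly n (T m ^+ j) = take_poly n (T n ^+ j).
Proof. by move=> lenm; apply/take_poly_dvdpXn/dvdp_subXX/dvdp_tree_approx. Qed.

Lemma tree_psum_mono j : {homo tree_psum j : n m / (n <= m)%N >-> n <= m}.
Proof.
move=> n m lenm; rewrite /tree_psum -(take_tree_approx j lenm).
have -> : take_poly n (T m ^+ j) = take_poly n (take_poly m (T m ^+ j)).
  exact/take_poly_dvdpXn/(dvdp_trans (dvdp_exp2l _ lenm))/dvdp_take_poly.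
apply: ler_horner_nneg => //; apply: sub_take_poly_nneg.
by rewrite take_poly_nneg ?rpredX ?tree_approx_nneg.
Qed.

Lemma tree_psum_le_exp j n : tree_psum j n <= tree_psum 1 n ^+ j.
Proof.
rewrite /tree_psum expr1 -horner_exp.
rewrite (take_poly_dvdpXn (q := take_poly n (T n) ^+ j)); last exact/dvdp_subXX/dvdp_take_poly.
apply: ler_horner_nneg => //; apply: sub_take_poly_nneg.
by rewrite rpredX ?take_poly_nneg ?tree_approx_nneg.
Qed.

Lemma exp_le_tree_psum j m : (0 < j)%N -> tree_psum 1 m ^+ j <= tree_psum j (j * m).
Proof.
move=> j_gt0; case: m => [|m].
  by rewrite /tree_psum take_poly0l horner0 expr0n gtn_eqF ?tree_psum_ge0.
set q := take_poly m.+1 (T (j * m.+1)).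
have lemn : (m.+1 <= j * m.+1)%N by rewrite leq_pmull.
have -> : tree_psum 1 m.+1 = q.[x] by rewrite /tree_psum -(take_tree_approx 1 lemn) expr1.
have q_nneg : q \is a nneg by rewrite take_poly_nneg ?tree_approx_nneg.
rewrite -horner_exp -(@take_poly_id _ (j * m.+1) (q ^+ j)); last first.
  apply: leq_trans (size_poly_exp_leq _ _) _.
  have : (size q <= m.+1)%N by apply: size_take_poly.
  nia.
apply: ler_horner_nneg => //; rewrite -linearB take_poly_nneg // nneg_subXX //.
by rewrite sub_take_poly_nneg ?tree_approx_nneg.
Qed.

Lemma tree_psumS n : tree_psum 1 n.+1 = 1 + x * tree_psum 4 n.
Proof.
rewrite /tree_psum expr1 [T n.+1]/= take_polyD take_poly_id ?size_poly1 //.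
by rewrite mulrC -['X]expr1 take_polyMXn subn1 /= hornerD hornerC hornerMX mulrC.
Qed.

End TreePartialSums.

Lemma gcoef_psum_tree (R : numFieldType) (x : R) n :
  \sum_(k < n.+1) gcoef R k * x ^+ k = tree_psum x 2 n.+1 *+ 2 - tree_psum x 3 n.+1 - 1.
Proof.
set T := tree_approx R n.+1.
transitivity (take_poly n.+1 (T ^+ 2 *+ 2 - T ^+ 3 - 1)).[x].
  rewrite horner_take_poly; apply: eq_bigr => k _.
  by rewrite (gcoef_tree_approx _ (ltn_ord k)) mulr_natl.
rewrite !raddfB raddfMn /= [take_poly _ 1]take_poly_id ?size_poly1 //.
by rewrite !hornerD !hornerN hornerC mulr2n.
Qed.

Lemma quartic_fixpoint (R : realFieldType) (L : R) :
  0 <= L -> L = 1 + 27 / 256 * L ^+ 4 -> L = 4 / 3.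
Proof.
move=> L_ge0 fixL.
have : 27 / 256 * ((L - 4 / 3) ^+ 2 * (L ^+ 2 + 8 / 3 * L + 16 / 3)) = 0.
  have -> : 27 / 256 * ((L - 4 / 3) ^+ 2 * (L ^+ 2 + 8 / 3 * L + 16 / 3))
            = 1 + 27 / 256 * L ^+ 4 - L by field.
  by rewrite -fixL subrr.
move/eqP; rewrite mulf_eq0 => /orP [/eqP | ]; first lra.
by rewrite mulf_eq0 sqrf_eq0 subr_eq0 => /orP [/eqP // | /eqP]; nra.
Qed.

Section TreeLimit.
Variable R : realType.
Local Notation x := (27 / 256 : R).
Local Notation psum := (tree_psum x).

Let x_ge0 : 0 <= x. Proof. by rewrite divr_ge0 ?ler0n. Qed.

Lemma tree_psum1_le n : psum 1 n <= 4 / 3.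
Proof.
elim: n => [|n IHn]; first by rewrite /tree_psum take_poly0l horner0 divr_ge0 ?ler0n.
have le_psum4 : psum 4 n <= (4 / 3) ^+ 4.
  apply: le_trans (tree_psum_le_exp x_ge0 4 n) _.
  by rewrite lerXn2r // nnegrE ?tree_psum_ge0 ?divr_ge0 ?ler0n.
by rewrite tree_psumS; move: le_psum4; lra.
Qed.

Lemma cvgn_tree_psum j : cvgn (psum j).
Proof.
apply: nondecreasing_is_cvgn; first exact: tree_psum_mono.
exists ((4 / 3) ^+ j) => _ [n _ <-]; apply: le_trans (tree_psum_le_exp x_ge0 j n) _.
by rewrite lerXn2r ?tree_psum1_le // nnegrE ?tree_psum_ge0 ?divr_ge0 ?ler0n.
Qed.

Lemma tree_psum_le_limn j n : psum j n <= limn (psum j).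
Proof. by apply: nondecreasing_cvgn_le; [exact: tree_psum_mono | exact: cvgn_tree_psum]. Qed.

Lemma limn_tree_psum_ge0 j : 0 <= limn (psum j).
Proof. exact: le_trans (tree_psum_ge0 x_ge0 j 0) (tree_psum_le_limn j 0). Qed.

Lemma limn_tree_psum j : (0 < j)%N -> limn (psum j) = limn (psum 1) ^+ j.
Proof.
move=> j_gt0; apply/eqP; rewrite eq_le; apply/andP; split.
  apply: limr_le; first exact: cvgn_tree_psum.
  apply: nearW => n; apply: le_trans (tree_psum_le_exp x_ge0 j n) _.
  by rewrite lerXn2r ?tree_psum_le_limn // nnegrE ?tree_psum_ge0 ?limn_tree_psum_ge0.
have psum1X : (fun m => psum 1 m ^+ j) @ \oo --> limn (psum 1) ^+ j.
  exact: (continuous_cvg _ (@exprn_continuous R j _) (cvgn_tree_psum (j := 1))).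
apply: (cvgr_to_le psum1X); apply: nearW => m.
exact: le_trans (exp_le_tree_psum x_ge0 m j_gt0) (tree_psum_le_limn _ _).
Qed.

Lemma limn_tree_psum1 : limn (psum 1) = 4 / 3.
Proof.
apply: quartic_fixpoint; first exact: limn_tree_psum_ge0.
have : (fun n => psum 1 n.+1) @ \oo --> 1 + x * limn (psum 1) ^+ 4.
  rewrite (_ : (fun n => _) = fun n => 1 + x * psum 4 n); last first.
    by apply/funext => n; rewrite tree_psumS.
  apply: cvgD; first exact: cvg_cst.
  apply: cvgM; first exact: cvg_cst.
  by rewrite -limn_tree_psum //; exact: cvgn_tree_psum.
by rewrite cvg_shiftS => /(cvg_lim (@Rhausdorff R)).
Qed.

Lemma cvg_series_gcoef : [series gcoef R k * x ^+ k]_k @ \oo --> (5 / 27 : R).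
Proof.
rewrite -cvg_shiftS (eq_cvg _ _ (g := fun n => psum 2 n.+1 *+ 2 - psum 3 n.+1 - 1)); last first.
  by move=> n; rewrite seriesEord /= gcoef_psum_tree.
have psum_cvg j : (fun n => psum j n.+1) @ \oo --> limn (psum j).
  by rewrite cvg_shiftS; exact: cvgn_tree_psum.
have -> : (5 / 27 : R) = limn (psum 2) *+ 2 - limn (psum 3) - 1.
  by rewrite (@limn_tree_psum 2) // (@limn_tree_psum 3) // limn_tree_psum1; field.
by apply: cvgB; [apply: cvgB; [apply: cvgMn|] | exact: cvg_cst].
Qed.

End TreeLimit.

Theorem mainTheorem4 :
  (let g : fps rat := @gcoef rat in
   let P (p : {poly rat}) (k : nat) : fps rat := fps_mul (fps_of_poly p) (fps_pow g k) in
   forall n : nat,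
     fps_add (P ('X * ('X^2 + 11%:R *: 'X - 1)) 0%N)
      (fps_add (P (4%:R *: 'X^3 + 25%:R *: 'X^2 - 14%:R *: 'X + 1) 1%N)
       (fps_add (P ('X * (6%:R *: 'X^2 + 17%:R *: 'X + 3%:R)) 2%N)
        (fps_add (P ('X^2 * (4%:R *: 'X + 3%:R)) 3%N)
                 (P ('X^3) 4%N)))) n = 0)
  /\
  (forall R : realType,
     ([series @gcoef R k * (27 / 256 : R) ^+ k]_k @ \oo --> (5 / 27 : R))).
Proof.
split=> [g P n | R]; last exact: cvg_series_gcoef.
set G := 2%:R * tree_approx rat n.+1 ^+ 2 - tree_approx rat n.+1 ^+ 3 - 1.
have agree k : (k <= n)%N -> g k = G`_k by move=> lekn; apply: gcoef_tree_approx.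
rewrite /fps_add /P !(fps_mul_pow_poly _ _ agree) -!coefD.
apply: coef_dvdpXn (ltnSn n); rewrite (_ : _ + _ = grel 'X G); first exact: dvdp_grel_tree.
by rewrite /grel !scaler_nat; ring.
Qed.
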